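(* Let $(M,d)$ be a metric space and let $T:M\to M$ be a surjective mapping such that $$\inf_{n\ge 1}\ \sup_{x\in M} d(T^{n+1}x,T^{n}x)=0.$$ Then $T$ is the identity mapping on $M$.
   Context: $T^n$ denotes the $n$-fold composition of $T$ with itself. *)

From HB Require Import structures.
From mathcomp Require Import all_boot all_order all_algebra.
From mathcomp Require Import all_classical all_reals all_analysis.

From HB Require Import structures.
From mathcomp Require Import all_boot all_order all_algebra.
From mathcomp Require Import all_classical all_reals all_analysis.
Import Order.TTheory GRing.Theory Num.Theory.
Local Open Scope classical_set_scope.
Local Open Scope ring_scope.

(* Since every T^n is surjective, each y is some T^n x, so the n-th supremum
   already dominates d(T y, y); hence so does the infimum, which is 0. *)

Lemma iter_surjective {X : Type} {T : X -> X} :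
  (forall y, exists x, T x = y) -> forall n y, exists x, iter n T x = y.
Proof.
move=> Tsurj; elim=> [|n IHn] y; first by exists y.
have [z <-] := Tsurj y; have [x <-] := IHn z.
by exists x.
Qed.

Section Displacement.
Context {R : realType} {M : metricType R} {T : M -> M}.
Hypothesis T_surj : forall y : M, exists x : M, T x = y.

Lemma mdist_displacement_le_sup (n : nat) (y : M) :
  ((mdist (T y) y)%:E <=
   ereal_sup [set (mdist (iter n.+1 T x) (iter n T x))%:E | x in [set: M]])%E.
Proof.
have [x <-] := iter_surjective T_surj n y.
by apply: ereal_sup_ubound; exists x; rewrite // iterS.
Qed.

Lemma mdist_displacement_le_inf (A : set nat) (y : M) :
  ((mdist (T y) y)%:E <=
   ereal_inf [set ereal_sup [set (mdist (iter n.+1 T x) (iter n T x))%:E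
                             | x in [set: M]] | n in A])%E.
Proof. by apply: le_ereal_inf_tmp => _ [n _ <-]; exact: mdist_displacement_le_sup. Qed.

End Displacement.

Theorem lemma2p1 (R : realType) (M : metricType R) (T : M -> M) :
  (forall y : M, exists x : M, T x = y) ->
  ereal_inf [set ereal_sup [set (mdist (iter n.+1 T x) (iter n T x))%:E | x in [set: M]]
            | n in [set n : nat | (1 <= n)%N]] = 0%E ->
  forall x : M, T x = x.
Proof.
move=> T_surj inf0 y; apply: mdist_positivity; apply/eqP.
rewrite eq_le mdist_ge0 andbT -lee_fin.
have := mdist_displacement_le_inf T_surj [set n : nat | (1 <= n)%N] y.
by rewrite inf0.
Qed.
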